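(* Let $\theta\in\mathbb{F}_{q^3}^*$. Then $\mathrm{Pr}(\Pi_\theta)=\mathcal S_{\theta^2}$ and $\mathrm{Sp}(\Pi_\theta)=\mathcal S_{-\theta^2}$.
   Context: Let $q$ be a prime power, $\mathbb{F}_{q^3}^*=\mathbb{F}_{q^3}\setminus\{0\}$. Points of $\mathrm{PG}(2,q^3)$ have homogeneous coordinates $(x,y,z)$ and lines $[a,b,c]$. Let $T=(0,0,1)$ and let $m_T$ be the line $[0,0,1]$ (joining $(1,0,0)$ and $(0,1,0)$). For $\theta\in\mathbb{F}_{q^3}^*$ let $\mathcal S_\theta=\{(x\theta,x^q,0):x\in\mathbb{F}_{q^3}^*\}\subset m_T$ and let $\Pi_\theta=\{(r\theta^{q+1},r^q,r^{q^2}\theta):r\in\mathbb{F}_{q^3}^*\}$, which is a subplane of order $q$ (an $\mathbb{F}_q$-plane); its lines are the lines meeting it in $q+1$ points. For an $\mathbb{F}_q$-plane $\mathcal B$ not containing $T$ and with no line equal to $m_T$, the projection is $\mathrm{Pr}(\mathcal B)=\{TP\cap m_T: P\text{ a point of }\mathcal B\}$ and the splash is $\mathrm{Sp}(\mathcal B)=\{\ell\cap m_T:\ell\text{ a line of }\mathcal B\}$. *)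

From HB Require Import structures.
From mathcomp Require Import all_boot all_order all_algebra all_field.
Set Implicit Arguments. Unset Strict Implicit. Unset Printing Implicit Defensive.
Import GRing.Theory.
Local Open Scope ring_scope.

Section PG2.
Variable F : finFieldType.

(* Homogeneous coordinate triples (x, y, z); also used for line coordinates [a, b, c]. *)
Definition trip := (F * F * F)%type.
Definition mk (x y z : F) : trip := (x, y, z).
Definition c1 (v : trip) : F := v.1.1.
Definition c2 (v : trip) : F := v.1.2.
Definition c3 (v : trip) : F := v.2.

(* Canonical representative of the projective class of a triple:
   the first nonzero coordinate is scaled to 1 (the zero triple is sent to itself). *)
Definition proj (v : trip) : trip :=
  if c1 v != 0 then mk 1 (c2 v / c1 v) (c3 v / c1 v)
  else if c2 v != 0 then mk 0 1 (c3 v / c2 v)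
  else if c3 v != 0 then mk 0 0 1 else mk 0 0 0.

Definition is_pt (v : trip) : bool := (v != mk 0 0 0) && (proj v == v).

Definition incident (l P : trip) : bool :=
  c1 l * c1 P + c2 l * c2 P + c3 l * c3 P == 0.

(* Cross product: line joining two points / point common to two lines. *)
Definition cross (u v : trip) : trip :=
  mk (c2 u * c3 v - c3 u * c2 v) (c3 u * c1 v - c1 u * c3 v) (c1 u * c2 v - c2 u * c1 v).

Definition T : trip := mk 0 0 1.
Definition mT : trip := mk 0 0 1.

(* The lines of an F_q-plane B (q is the order): lines meeting B in q+1 points. *)
Definition lines_of (q : nat) (B : {set trip}) : {set trip} :=
  [set l : trip | is_pt l & #|[set P in B | incident l P]| == q.+1].

Definition Pr (B : {set trip}) : {set trip} :=
  [set proj (cross (cross T P) mT) | P in B].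

Definition Sp (q : nat) (B : {set trip}) : {set trip} :=
  [set proj (cross l mT) | l in lines_of q B].


Definition Sset (q : nat) (th : F) : {set trip} :=
  [set proj (mk (x * th) (x ^+ q) 0) | x in [set x : F | x != 0]].

Definition Pi (q : nat) (th : F) : {set trip} :=
  [set proj (mk (r * th ^+ q.+1) (r ^+ q) (r ^+ (q ^ 2)%N * th)) | r in [set r : F | r != 0]].

End PG2.

Definition prime_power (q : nat) : Prop := exists p k : nat, prime p /\ (0 < k)%N /\ q = (p ^ k)%N.

From mathcomp Require Import all_boot all_order all_algebra all_field.
From mathcomp Require Import ring zify.
Import GRing.Theory.
Local Open Scope ring_scope.
Set Implicit Arguments. Unset Strict Implicit. Unset Printing Implicit Defensive.

(* Let x^q be the Frobenius of F = GF(q^3) over GF(q) and Tr y = y + y^q + y^(q^2).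
   Root counting bounds the fixed field of Frobenius by q elements and ker Tr by q^2, and
   q^3 = |im Tr| |ker Tr| with im Tr inside the fixed field forces both bounds to be attained.
   The point of Pi_theta with parameter r lies on [a theta^(-q-1), a^q, a^(q^2) theta^(-1)]
   iff Tr(a r) = 0, and the cross product of two points of Pi_theta is proportional to such a
   line. Parameters r, r' give the same point iff r'/r is fixed by Frobenius, so each of these
   lines carries (q^2 - 1)/(q - 1) = q + 1 points: they are exactly the lines of Pi_theta.
   Finally TP meets m_T in P with its last coordinate replaced by 0, a line [u, v, w] meets m_T
   in (v, -u, 0), and the substitutions x = r/theta and x = (a theta)^(-1) give S_(theta^2) and
   S_(-theta^2). *)

Section ProjectiveCoordinates.
Variable F : finFieldType.
Implicit Types (u v w l : trip F) (a : F).

Definition scale a v : trip F := mk (a * c1 v) (a * c2 v) (a * c3 v).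
Definition dot u v : F := c1 u * c1 v + c2 u * c2 v + c3 u * c3 v.

Lemma trip_eta v : v = mk (c1 v) (c2 v) (c3 v).
Proof. by case: v => [[]]. Qed.

Lemma mk_eq (x y z x' y' z' : F) :
  (mk x y z == mk x' y' z') = [&& x == x', y == y' & z == z'].
Proof. by rewrite /mk !xpair_eqE andbA. Qed.

Lemma trip_neq0 v : (v != mk 0 0 0) = [|| c1 v != 0, c2 v != 0 | c3 v != 0].
Proof. by rewrite {1}(trip_eta v) mk_eq !negb_and. Qed.

Lemma scale_neq0 a v : a != 0 -> v != mk 0 0 0 -> scale a v != mk 0 0 0.
Proof. by move=> a0; rewrite !trip_neq0 /= !mulf_eq0 (negbTE a0). Qed.

Lemma proj_scale a v : a != 0 -> proj (scale a v) = proj v.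
Proof.
move=> a0; rewrite /proj /scale /c1 /c2 /c3 /= !mulf_eq0 (negbTE a0) /=.
case: ifP => _; first by congr (_, _, _); rewrite invfM mulrACA divff // mul1r.
by case: ifP => _; first by congr (_, _, _); rewrite invfM mulrACA divff // mul1r.
Qed.

Lemma proj_eq_scale v : v != mk 0 0 0 -> exists2 a, a != 0 & proj v = scale a v.
Proof.
rewrite trip_neq0 /proj /scale => v0.
case: ifPn => [v1 | /negPn/eqP v1].
  by exists (c1 v)^-1; rewrite ?invr_eq0 // mulVf // !(mulrC _^-1).
case: ifPn => [v2 | /negPn/eqP v2].
  by exists (c2 v)^-1; rewrite ?invr_eq0 // mulVf // v1 mulr0 !(mulrC _^-1).
rewrite v1 v2 eqxx /= in v0; rewrite v0.
by exists (c3 v)^-1; rewrite ?invr_eq0 // mulVf // v1 v2 mulr0.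
Qed.

Lemma proj_neq0 v : v != mk 0 0 0 -> proj v != mk 0 0 0.
Proof. by move=> v0; have [a a0 ->] := proj_eq_scale v0; apply: scale_neq0. Qed.

Lemma proj_idem v : proj (proj v) = proj v.
Proof.
have [->|v0] := eqVneq v (mk 0 0 0); first by rewrite /proj /= !eqxx.
by have [a a0 e] := proj_eq_scale v0; rewrite {1}e proj_scale.
Qed.

Lemma is_pt_proj v : v != mk 0 0 0 -> is_pt (proj v).
Proof. by move=> v0; rewrite /is_pt proj_neq0 //= proj_idem. Qed.

Lemma proj_c1 v : c1 v != 0 -> proj v = mk 1 (c2 v / c1 v) (c3 v / c1 v).
Proof. by rewrite /proj => ->. Qed.

Lemma incidentE l v : incident l v = (dot l v == 0).
Proof. by []. Qed.

Lemma dot_scalel a l v : dot (scale a l) v = a * dot l v.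
Proof. rewrite /dot /scale /c1 /c2 /c3 /=; ring. Qed.

Lemma dot_scaler a l v : dot l (scale a v) = a * dot l v.
Proof. rewrite /dot /scale /c1 /c2 /c3 /=; ring. Qed.

Lemma incident_projl l v : l != mk 0 0 0 -> incident (proj l) v = incident l v.
Proof.
move=> l0; have [a a0 ->] := proj_eq_scale l0.
by rewrite !incidentE dot_scalel mulf_eq0 (negbTE a0).
Qed.

Lemma incident_projr l v : v != mk 0 0 0 -> incident l (proj v) = incident l v.
Proof.
move=> v0; have [a a0 ->] := proj_eq_scale v0.
by rewrite !incidentE dot_scaler mulf_eq0 (negbTE a0).
Qed.

Lemma cross_cross_eq0 l u v :
  dot l u = 0 -> dot l v = 0 -> cross l (cross u v) = mk 0 0 0.
Proof.
move=> lu lv; have grassmann : cross l (cross u v) =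
    mk (dot l v * c1 u - dot l u * c1 v) (dot l v * c2 u - dot l u * c2 v)
       (dot l v * c3 u - dot l u * c3 v).
  by rewrite /cross /dot /mk /c1 /c2 /c3 /=; congr (_, _, _); ring.
by rewrite grassmann lu lv !mul0r subr0.
Qed.

Lemma proj_eq_of_cross_eq0 l w : l != mk 0 0 0 -> w != mk 0 0 0 ->
  cross l w = mk 0 0 0 -> proj l = proj w.
Proof.
move=> l0 w0; rewrite /cross /mk => -[/eqP e1 /eqP e2 /eqP e3].
rewrite !subr_eq0 in e1 e2 e3.
suff [a la] : exists a, l = scale a w.
  rewrite la proj_scale //; apply: contraNneq l0 => a0.
  by rewrite la a0 /scale !mul0r.
have scaled (x y z u : F) : z != 0 -> x * z == y * u -> x = y / z * u.
  by move=> z0 /eqP e; rewrite mulrAC -e mulfK.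
move: w0; rewrite trip_neq0 => /or3P[wk|wk|wk]; [exists (c1 l / c1 w) |
  exists (c2 l / c2 w) | exists (c3 l / c3 w)]; rewrite {1}(trip_eta l);
  by congr (_, _, _); apply: scaled; rewrite // ?(e1, e2, e3) // eq_sym ?(e1, e2, e3).
Qed.

Lemma proj_join l u v : l != mk 0 0 0 -> incident l u -> incident l v ->
  cross u v != mk 0 0 0 -> proj l = proj (cross u v).
Proof.
move=> l0 /eqP lu /eqP lv uv0.
exact: proj_eq_of_cross_eq0 l0 uv0 (cross_cross_eq0 lu lv).
Qed.

Lemma cross_scalel a u v : cross (scale a u) v = scale a (cross u v).
Proof. by rewrite /cross /scale /c1 /c2 /c3 /=; congr (_, _, _); ring. Qed.

Lemma cross_scaler a u v : cross u (scale a v) = scale a (cross u v).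
Proof. by rewrite /cross /scale /c1 /c2 /c3 /=; congr (_, _, _); ring. Qed.

Lemma proj_cross_projl u v : u != mk 0 0 0 -> proj (cross (proj u) v) = proj (cross u v).
Proof. by move=> u0; have [a a0 ->] := proj_eq_scale u0; rewrite cross_scalel proj_scale. Qed.

End ProjectiveCoordinates.

Lemma card_uniform_fibres (T U : finType) (A : {set T}) (f : T -> U) m :
  {in A, forall x, #|[set y in A | f y == f x]| = m} -> #|A| = (#|f @: A| * m)%N.
Proof.
move=> fibres; rewrite -sum1_card (partition_big_imset f) /= -sum_nat_const.
apply: eq_bigr => _ /imsetP [x xA ->].
by rewrite -(fibres x xA) -sum1_card; apply: eq_bigl => y; rewrite inE.
Qed.

Lemma card_roots_lt (F : finFieldType) (p : {poly F}) (S : {set F}) :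
  p != 0 -> {in S, forall x, root p x} -> (#|S| < size p)%N.
Proof.
move=> p0 Sp; rewrite cardE; apply: max_poly_roots => //; last exact: enum_uniq.
by apply/allP => x; rewrite mem_enum; apply: Sp.
Qed.

Lemma imset_reparam (T1 T2 U : finType) (A : {set T1}) (B : {set T2})
    (g : T1 -> U) (h : T2 -> U) (phi : T1 -> T2) (psi : T2 -> T1) :
  {in A, forall x, phi x \in B} -> {in B, forall y, psi y \in A} ->
  {in B, cancel psi phi} -> {in A, forall x, g x = h (phi x)} -> g @: A = h @: B.
Proof.
move=> phiB psiA psiK ghphi; apply/setP => u; apply/imsetP/imsetP => [[x xA ->] | [y yB ->]].
  by exists (phi x); rewrite ?phiB ?ghphi.
by exists (psi y); rewrite ?psiA // ghphi ?psiK ?psiA.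
Qed.

Lemma sep_imset (T U : finType) (g : T -> U) (A : {set T}) (P : pred U) :
  [set y in g @: A | P y] = g @: [set x in A | P (g x)].
Proof.
apply/setP => y; rewrite !inE; apply/andP/imsetP => [[/imsetP [x xA ->] Px] | [x]].
  by exists x; rewrite // inE xA.
by rewrite inE => /andP [xA Px] ->; split=> //; apply: imset_f.
Qed.

Section CubicFrobenius.
Variables (F : finFieldType) (q : nat).
Hypotheses (q_gt1 : (1 < q)%N) (charq : [pchar F].-nat q) (cardF : #|F| = (q ^ 3)%N).

Lemma frobD (x y : F) : (x + y) ^+ q = x ^+ q + y ^+ q.
Proof. exact: exprDn_pchar. Qed.

Lemma frobB (x y : F) : (x - y) ^+ q = x ^+ q - y ^+ q.
Proof. by rewrite frobD exprNn_pchar. Qed.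

Lemma frob0 : (0 : F) ^+ q = 0.
Proof. by rewrite expr0n; case: q q_gt1. Qed.

Lemma frob3 (x : F) : x ^+ q ^+ q ^+ q = x.
Proof. by rewrite -!exprM mulnn -expnS -cardF expf_card. Qed.

Lemma expr_qsq (x : F) : x ^+ (q ^ 2)%N = x ^+ q ^+ q.
Proof. by rewrite -exprM mulnn. Qed.

Definition tr (y : F) : F := y + y ^+ q + y ^+ q ^+ q.

Lemma trD x y : tr (x + y) = tr x + tr y.
Proof. rewrite /tr !frobD; ring. Qed.

Lemma trB x y : tr (x - y) = tr x - tr y.
Proof. rewrite /tr !frobB; ring. Qed.

Lemma tr0 : tr 0 = 0.
Proof. by rewrite /tr !frob0 !addr0. Qed.

Lemma tr_frob y : tr y ^+ q = tr y.
Proof. rewrite /tr !frobD frob3; ring. Qed.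

Definition fixed : {set F} := [set s | s ^+ q == s].
Definition tr_ker : {set F} := [set y | tr y == 0].

Lemma card_fixed_le : (#|fixed| <= q)%N.
Proof.
have sz : size ('X^q - 'X : {poly F}) = q.+1.
  by rewrite size_polyDl size_polyXn // size_polyN size_polyX.
rewrite -ltnS -sz; apply: card_roots_lt; first by rewrite -size_poly_eq0 sz.
by move=> x; rewrite inE /root !hornerE subr_eq0.
Qed.

Lemma card_tr_ker_le : (#|tr_ker| <= q * q)%N.
Proof.
have sz : size ('X^(q * q) + 'X^q + 'X : {poly F}) = (q * q).+1.
  by rewrite -addrA size_polyDl size_polyXn // size_polyDl size_polyXn ?size_polyX // ltnS; nia.
rewrite -ltnS -sz; apply: card_roots_lt; first by rewrite -size_poly_eq0 sz.
by move=> x; rewrite inE /root !hornerE exprM /tr addrC [x + _]addrC addrA.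
Qed.

Lemma card_tr_fibres : #|F| = (#|tr @: [set: F]| * #|tr_ker|)%N.
Proof.
rewrite -cardsT; apply: card_uniform_fibres => x _.
have -> : [set y in [set: F] | tr y == tr x] = [set k + x | k in tr_ker].
  apply/setP => y; rewrite !inE; apply/idP/imsetP => [/eqP yx | [k]].
    by exists (y - x); rewrite ?subrK // inE trB yx subrr.
  by rewrite inE => /eqP k0 ->; rewrite trD k0 add0r eqxx.
by rewrite card_imset //; apply: addIr.
Qed.

Lemma card_tr_ker_fixed : #|tr_ker| = (q * q)%N /\ #|fixed| = q.
Proof.
have im_fixed : tr @: [set: F] \subset fixed.
  by apply/subsetP => _ /imsetP [y _ ->]; rewrite inE tr_frob.
have := subset_leq_card im_fixed; have := card_fixed_le; have := card_tr_ker_le.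
have := card_tr_fibres; rewrite cardF.
move: #|tr @: _| #|tr_ker| #|fixed| => I K E; nia.
Qed.

End CubicFrobenius.

Section PiTheta.
Variables (F : finFieldType) (q : nat).
Hypotheses (q_gt1 : (1 < q)%N) (charq : [pchar F].-nat q) (cardF : #|F| = (q ^ 3)%N).
Variable t : F.
Hypothesis t0 : t != 0.

Local Notation Fnz := [set r : F | r != 0].
Local Notation Fq := (fixed F q).
Local Notation Ktr := (tr_ker F q).
Local Notation tr := (tr q).

Definition pt_vec (r : F) : trip F := mk (r * t ^+ q.+1) (r ^+ q) (r ^+ (q ^ 2)%N * t).
Definition pt (r : F) : trip F := proj (pt_vec r).
Definition line_vec (a : F) : trip F := mk (a / t ^+ q.+1) (a ^+ q) (a ^+ (q ^ 2)%N / t).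
Definition line (a : F) : trip F := proj (line_vec a).

Lemma PiE : Pi q t = pt @: Fnz.
Proof. by []. Qed.

Lemma texp_neq0 n : t ^+ n != 0.
Proof. exact: expf_neq0. Qed.

Lemma pt_vec_neq0 r : r != 0 -> pt_vec r != mk 0 0 0.
Proof. by move=> r0; rewrite trip_neq0 /= mulf_neq0 ?texp_neq0. Qed.

Lemma line_vec_neq0 a : a != 0 -> line_vec a != mk 0 0 0.
Proof. by move=> a0; rewrite trip_neq0 /= mulf_neq0 ?invr_eq0 ?texp_neq0. Qed.

Lemma dot_line_pt a r : dot (line_vec a) (pt_vec r) = tr (a * r).
Proof.
rewrite /dot /line_vec /pt_vec /c1 /c2 /c3 /= /tr !expr_qsq !exprMn; field.
by rewrite texp_neq0 t0.
Qed.

Lemma incident_line_pt a r : a != 0 -> r != 0 ->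
  incident (line a) (pt r) = (tr (a * r) == 0).
Proof.
move=> a0 r0.
by rewrite incident_projl ?incident_projr ?line_vec_neq0 ?pt_vec_neq0 // incidentE dot_line_pt.
Qed.

Lemma pt_vec_scale s r : s ^+ q = s -> pt_vec (s * r) = scale s (pt_vec r).
Proof. by move=> sq; rewrite /pt_vec /scale /c1 /c2 /c3 /= !expr_qsq !exprMn !sq !mulrA. Qed.

Lemma eq_pt r r' : r != 0 -> r' != 0 -> (pt r' == pt r) = (r' ^+ q * r == r' * r ^+ q).
Proof.
move=> r0 r'0; apply/idP/idP.
  rewrite /pt !proj_c1 ?mulf_neq0 ?texp_neq0 // mk_eq => /and3P [_ e _].
  move: e; rewrite /= eqr_div ?mulf_neq0 ?texp_neq0 // !mulrA.
  by rewrite (inj_eq (mulIf (texp_neq0 _))) [r ^+ q * r']mulrC.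
move=> /eqP e; have s0 : r' / r != 0 by rewrite mulf_neq0 ?invr_eq0.
have sq : (r' / r) ^+ q = r' / r.
  by rewrite exprMn exprVn; apply/eqP; rewrite eqr_div ?expf_neq0 // e.
by rewrite -{1}(divfK r0 r') /pt pt_vec_scale // proj_scale.
Qed.

Lemma pt_fibre r : r != 0 -> [set y in Fnz | pt y == pt r] = [set s * r | s in Fq :\ 0].
Proof.
move=> r0; apply/setP => y; rewrite !inE; apply/andP/imsetP => [[y0] | [s]].
  rewrite eq_pt // => /eqP e; exists (y / r); last by rewrite divfK.
  rewrite !inE mulf_neq0 ?invr_eq0 //= exprMn exprVn.
  by rewrite eqr_div ?expf_neq0 // e.
rewrite !inE => /andP [s0 /eqP sq] ->; have sr0 : s * r != 0 by rewrite mulf_neq0.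
by rewrite eq_pt // exprMn sq mulrAC.
Qed.

Lemma card_pt_fibre r : r != 0 -> #|[set y in Fnz | pt y == pt r]| = q.-1.
Proof.
move=> r0; rewrite pt_fibre // card_imset; last exact: mulIf.
have := cardsD1 0 Fq; rewrite (card_tr_ker_fixed q_gt1 charq cardF).2 inE frob0 ?eqxx //.
by move=> cardFq; rewrite [in RHS]cardFq.
Qed.

Lemma card_Pi_line a : a != 0 -> #|[set P in Pi q t | incident (line a) P]| = q.+1.
Proof.
move=> a0; rewrite PiE sep_imset.
set KS := [set r in Fnz | incident (line a) (pt r)].
have fibres : #|KS| = (#|pt @: KS| * q.-1)%N.
  apply: card_uniform_fibres => x; rewrite !inE => /andP [x0 incx].
  rewrite -(card_pt_fibre x0); apply: eq_card => y; rewrite !inE.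
  by have [->|] := eqVneq (pt y) (pt x); rewrite ?incx ?andbT ?andbF.
have cardKS : #|KS| = (q * q).-1.
  have -> : KS = [set y / a | y in Ktr :\ 0].
    apply/setP => r; rewrite !inE; apply/andP/imsetP => [[r0] | [y]].
      rewrite incident_line_pt // => ar0; exists (a * r); last by rewrite [a * r]mulrC mulfK.
      by rewrite !inE mulf_neq0.
    rewrite !inE => /andP [y0 try0] ->; have ya0 : y / a != 0 by rewrite mulf_neq0 ?invr_eq0.
    by rewrite ya0 incident_line_pt // mulrC divfK.
  rewrite card_imset; last by apply: mulIf; rewrite invr_eq0.
  have := cardsD1 0 Ktr; rewrite (card_tr_ker_fixed q_gt1 charq cardF).1 inE tr0 ?eqxx //.
  by move=> cardK; rewrite [in RHS]cardK.
have q1_gt0 : (0 < q.-1)%N by case: q q_gt1 => [|[]].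
apply/eqP; rewrite -(eqn_pmul2r q1_gt0) -fibres cardKS; apply/eqP; lia.
Qed.

Lemma cross_pt_vec r1 r2 : cross (pt_vec r1) (pt_vec r2) =
  scale (t ^+ q.+2) (line_vec ((r1 * r2 ^+ q - r1 ^+ q * r2) ^+ q)).
Proof.
rewrite /cross /scale /line_vec /pt_vec /c1 /c2 /c3 /= !expr_qsq !(frobB charq) !exprMn.
rewrite !(frob3 cardF) !exprS; congr (_, _, _); field; by rewrite ?t0 ?texp_neq0.
Qed.

Lemma mem_lines_of_Pi l : l \in lines_of q (Pi q t) -> l \in line @: Fnz.
Proof.
rewrite inE => /andP [ptl /eqP cardl].
have /card_gt1P [P1 [P2 [P1l P2l]]] : (1 < #|[set P in Pi q t | incident l P]|)%N.
  by rewrite cardl ltnS ltnW.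
move: P1l P2l; rewrite !inE PiE.
move=> /andP [/imsetP [r1 r10 ->] inc1] /andP [/imsetP [r2 r20 ->] inc2] pt12.
rewrite !inE in r10 r20.
have l0 : l != mk 0 0 0 by case/andP: ptl.
rewrite /pt !incident_projr ?pt_vec_neq0 // in inc1 inc2.
have := proj_join l0 inc1 inc2; rewrite cross_pt_vec.
set b := r1 * r2 ^+ q - r1 ^+ q * r2 => join.
have b0 : b != 0 by rewrite subr_eq0 eq_sym -eq_pt // eq_sym.
apply/imsetP; exists (b ^+ q); first by rewrite inE expf_neq0.
case/andP: ptl => _ /eqP <-; rewrite join ?proj_scale ?texp_neq0 //.
by rewrite scale_neq0 ?texp_neq0 ?line_vec_neq0 ?expf_neq0.
Qed.

Lemma lines_of_Pi : lines_of q (Pi q t) = line @: Fnz.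
Proof.
apply/setP => l; apply/idP/idP; first exact: mem_lines_of_Pi.
case/imsetP => a; rewrite inE => a0 ->.
by rewrite inE is_pt_proj ?line_vec_neq0 //= card_Pi_line.
Qed.

Lemma Pr_Pi : Pr (Pi q t) = Sset q (t ^+ 2).
Proof.
rewrite /Pr PiE -imset_comp.
apply: (imset_reparam (phi := fun r => r / t) (psi := fun x => x * t)).
- by move=> r; rewrite !inE => r0; rewrite mulf_neq0 ?invr_eq0.
- by move=> x; rewrite !inE => x0; rewrite mulf_neq0.
- by move=> x _; rewrite /= mulfK.
move=> r; rewrite inE => r0 /=.
have [a a0 ->] : exists2 a, a != 0 & pt r = scale a (pt_vec r) by apply/proj_eq_scale/pt_vec_neq0.
rewrite cross_scaler cross_scalel proj_scale //.
(* (r t^(q+1), r^q, 0) = t^q ((r/t) t^2, (r/t)^q, 0) *)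
rewrite -[RHS](proj_scale _ (texp_neq0 q)); congr proj.
rewrite /cross /scale /pt_vec /T /mT /c1 /c2 /c3 /= exprMn exprVn exprS.
by congr (_, _, _); field; rewrite ?t0 ?texp_neq0.
Qed.

Lemma Sp_Pi : Sp q (Pi q t) = Sset q (- t ^+ 2).
Proof.
rewrite /Sp lines_of_Pi -imset_comp.
apply: (imset_reparam (phi := fun a => (a * t)^-1) (psi := fun x => (x * t)^-1)).
- by move=> a; rewrite !inE => a0; rewrite invr_eq0 mulf_neq0.
- by move=> x; rewrite !inE => x0; rewrite invr_eq0 mulf_neq0.
- by move=> x _; rewrite /= [(x * t)^-1]invfM -mulrA mulVf // mulr1 invrK.
move=> a; rewrite inE => a0 /=.
(* (a^q, -a t^(-q-1), 0) = c (-x t^2, x^q, 0) for x = (a t)^(-1) and c = -a^(q+1)/t *)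
have c0 : - a ^+ q.+1 / t != 0 by rewrite mulf_neq0 ?oppr_eq0 ?expf_neq0 ?invr_eq0.
rewrite /line proj_cross_projl ?line_vec_neq0 // -[RHS](proj_scale _ c0); congr proj.
rewrite /cross /scale /line_vec /mT /c1 /c2 /c3 /= exprVn exprMn !exprS.
by congr (_, _, _); field; rewrite ?t0 ?a0 ?texp_neq0 ?expf_neq0.
Qed.

End PiTheta.

Lemma prime_power_gt1 q : prime_power q -> (1 < q)%N.
Proof. by move=> [p [k [p_pr [k0 ->]]]]; rewrite -(expn0 p) ltn_exp2l ?prime_gt1. Qed.

Lemma pchar_nat_card_pow (F : finFieldType) q n :
  prime_power q -> #|F| = (q ^ n)%N -> [pchar F].-nat q.
Proof.
move=> [p [k [p_pr [_ qE]]]] cardF; rewrite qE.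
have pF : p \in [pchar F] by apply: (card_finPcharP (n := (k * n)%N)); rewrite // cardF qE expnM.
by rewrite (eq_pnat _ (pcharf_eq pF)) pnatX pnat_id.
Qed.

Theorem theorem5p1 (q : nat) (F : finFieldType) (th : F) :
  prime_power q -> #|F| = (q ^ 3)%N -> th != 0 ->
  Pr (Pi q th) = Sset q (th ^+ 2) /\ Sp q (Pi q th) = Sset q (- th ^+ 2).
Proof.
move=> qpp cardF th0.
have q_gt1 := prime_power_gt1 qpp.
have charq := pchar_nat_card_pow qpp cardF.
by split; [apply: Pr_Pi | apply: Sp_Pi].
Qed.
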